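(* Let $G$ be a finite group. Every irreducible NIM-rep $(A,M)$ of the Tambara–Yamagami fusion ring $K(G,0)$ has basis $M$ consisting of at most two $G$-orbits.
   Context: The near-group fusion ring $K(G,\alpha)$ is the free $\mathbb{Z}$-module with basis $G\cup\{X\}$, with multiplication given by the group law on $G$, $gX=Xg=X$ for $g\in G$, and $X^2=\sum_{g\in G}g+\alpha X$; involution $g^*=g^{-1}$, $X^*=X$; $K(G,0)$ is the Tambara–Yamagami fusion ring. A NIM-rep of a fusion ring $(R,B)$ is a nonzero left $R$-module $A$ which is a free $\mathbb{Z}$-module with a fixed finite basis $M$, such that each $b\vartriangleright m$ is a non-negative integer combination of elements of $M$, and $(b\vartriangleright m,m')=(m,b^*\vartriangleright m')$ for the form making $M$ orthonormal. The elements of $G$ permute $M$, and the $G$-orbits partition $M$. A NIM-rep is irreducible if no proper nonempty subset of $M$ spans an $R$-submodule. *)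

From mathcomp Require Import all_boot all_order all_fingroup.
Set Implicit Arguments. Unset Strict Implicit. Unset Printing Implicit Defensive.

(* Basis of the near-group fusion ring K(G, alpha), G = the finite group gT:
   [Some g] is the basis element g in G, [None] is the extra element X. *)
Section NearGroup.
Variable gT : finGroupType.

Definition ng_basis := option gT.

(* Structure constants N_{a b}^c : a * b = \sum_c N_{a b}^c c  in K(G, alpha). *)
Definition ng_coef (alpha : nat) (a b c : ng_basis) : nat :=
  match a, b, c with
  | Some g, Some h, Some k => if (mulg g h == k) then 1 else 0
  | Some _, None, None => 1          (* g X = X *)
  | None, Some _, None => 1          (* X g = X *)
  | None, None, Some _ => 1          (* X^2 = sum_g g + alpha X *)
  | None, None, None => alpha
  | _, _, _ => 0
  end.

Definition ng_dual (a : ng_basis) : ng_basis :=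
  match a with Some g => Some (invg g) | None => None end.

(* A NIM-rep on the finite basis M: [act b m m'] is the (non-negative integer)
   coefficient of m' in b |> m. *)
Definition is_NIMrep (alpha : nat) (M : finType)
    (act : ng_basis -> M -> M -> nat) : Prop :=
  [/\ (0 < #|M|)%N,
      (forall m m', act (Some 1%g) m m' = (m == m' : nat)),
      (forall a b m m'',                              (* (ab) |> m = a |> (b |> m) *)
         \sum_(c : ng_basis) ng_coef alpha a b c * act c m m''
         = \sum_(m' : M) act b m m' * act a m' m'')%N &
      (forall b m m', act b m m' = act (ng_dual b) m' m)]. (* (b|>m,m') = (m,b^*|>m') *)

Definition NIM_irreducible (M : finType) (act : ng_basis -> M -> M -> nat) : Prop :=
  forall S : {set M}, S != set0 ->
    (forall b m m', m \in S -> (0 < act b m m')%N -> m' \in S) -> S = setT.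

Definition G_orbit (M : finType) (act : ng_basis -> M -> M -> nat) (m : M)
  : {set M} := [set m' | [exists g : gT, (0 < act (Some g) m m')%N]].

End NearGroup.

(* The relation "m' occurs in g |> m for some g" is the G-orbit equivalence.
   Since gX = X, the element X sends a whole orbit into the support of X |> m0;
   since X^2 = sum_g g when alpha = 0, X sends the support of X |> m0 back into
   the orbit of m0. Hence for any m1 in X |> m0 the union of the orbits of m0 and
   m1 spans a submodule, which is everything by irreducibility. *)
From mathcomp Require Import all_boot all_order all_fingroup.
Set Implicit Arguments. Unset Strict Implicit. Unset Printing Implicit Defensive.

Lemma sum_nat_gt0P (I : finType) (F : I -> nat) :
  reflect (exists i, 0 < F i) (0 < \sum_(i : I) F i).
Proof.
rewrite lt0n sum_nat_eq0 negb_forall.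
by apply: (iffP existsP) => -[i Fi]; exists i; rewrite lt0n in Fi *.
Qed.

Section NIMrepSupport.
Variables (gT : finGroupType) (M : finType) (act : ng_basis gT -> M -> M -> nat).
Variable alpha : nat.
Hypothesis act1 : forall m m', act (Some 1%g) m m' = (m == m' : nat).
Hypothesis actM : forall a b m m'',
  \sum_(c : ng_basis gT) ng_coef alpha a b c * act c m m''
  = \sum_(m' : M) act b m m' * act a m' m''.
Hypothesis act_dual : forall b m m', act b m m' = act (ng_dual b) m' m.

Local Notation X := (None : ng_basis gT).
Local Notation orbit := (G_orbit act).

Lemma act_mul_support a b m x y :
  0 < act b m x -> 0 < act a x y ->
  exists2 c, 0 < ng_coef alpha a b c & 0 < act c m y.
Proof.
move=> bmx axy.
have : (0 < \sum_(m' : M) act b m m' * act a m' y).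
  by apply/sum_nat_gt0P; exists x; rewrite muln_gt0 bmx axy.
rewrite -actM => /sum_nat_gt0P [c]; rewrite muln_gt0 => /andP [] *.
by exists c.
Qed.

Lemma G_orbitP m y : reflect (exists g, 0 < act (Some g) m y) (y \in orbit m).
Proof. by rewrite inE; apply: (iffP existsP) => -[g gmy]; exists g. Qed.

Lemma G_orbit_refl m : m \in orbit m.
Proof. by apply/G_orbitP; exists 1%g; rewrite act1 eqxx. Qed.

Lemma G_orbit_sym m y : y \in orbit m -> m \in orbit y.
Proof.
by move=> /G_orbitP [g gmy]; apply/G_orbitP; exists g^-1%g; rewrite act_dual /= invgK.
Qed.

Lemma G_orbit_trans m x y : x \in orbit m -> y \in orbit x -> y \in orbit m.
Proof.
move=> /G_orbitP [g gmx] /G_orbitP [h hxy].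
have [[k|] // _ kmy] := act_mul_support gmx hxy.
by apply/G_orbitP; exists k.
Qed.

Lemma G_orbit_eq m y : y \in orbit m -> orbit y = orbit m.
Proof.
move=> my; apply/setP => z; apply/idP/idP => [yz | mz].
  exact: G_orbit_trans my yz.
exact: G_orbit_trans (G_orbit_sym my) mz.
Qed.

Lemma act_X_orbit m x y : x \in orbit m -> 0 < act X x y -> 0 < act X m y.
Proof.
by move=> /G_orbitP [g gmx] Xxy; have [[k|] //] := act_mul_support gmx Xxy.
Qed.

Lemma act_X_nonzero m : exists x, 0 < act X m x.
Proof.
have : (0 < \sum_(c : ng_basis gT) ng_coef alpha X X c * act c m m).
  by apply/sum_nat_gt0P; exists (Some 1%g); rewrite /= act1 eqxx.
by rewrite actM => /sum_nat_gt0P [x]; rewrite muln_gt0 => /andP [Xmx _]; exists x.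
Qed.

Lemma act_XX_orbit m x y : alpha = 0 ->
  0 < act X m x -> 0 < act X x y -> y \in orbit m.
Proof.
move=> alpha0 Xmx Xxy; have [[k|] ckXX kmy] := act_mul_support Xmx Xxy.
  by apply/G_orbitP; exists k.
by rewrite /= alpha0 in ckXX.
Qed.

Lemma TY_orbit_pair_closed m0 m1 : alpha = 0 -> 0 < act X m0 m1 ->
  forall b m m', m \in orbit m0 :|: orbit m1 -> 0 < act b m m' ->
  m' \in orbit m0 :|: orbit m1.
Proof.
move=> alpha0 Xm0m1 [g|] m m' + bmm'; rewrite !in_setU.
- have gm' : m' \in orbit m by apply/G_orbitP; exists g.
  by case/orP => om; rewrite (G_orbit_trans om gm') ?orbT.
- have Xm1m0 : 0 < act X m1 m0 by rewrite act_dual.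
  case/orP => om; have Xm0m' := act_X_orbit om bmm'.
    by rewrite (act_XX_orbit alpha0 Xm1m0 Xm0m') orbT.
  by rewrite (act_XX_orbit alpha0 Xm0m1 Xm0m').
Qed.

End NIMrepSupport.

Theorem corollary3p16 (gT : finGroupType) (M : finType)
    (act : ng_basis gT -> M -> M -> nat) :
  is_NIMrep 0 act -> NIM_irreducible act ->
  (#|[set G_orbit act m | m : M]| <= 2)%N.
Proof.
move=> [/card_gt0P [m0 _] act1 actM act_dual] irr.
have [m1 Xm0m1] := act_X_nonzero act1 actM m0.
have cover : G_orbit act m0 :|: G_orbit act m1 = setT.
  apply: irr; first by apply/set0Pn; exists m0; rewrite inE G_orbit_refl.
  exact: (TY_orbit_pair_closed actM act_dual (erefl 0) Xm0m1).
have orbits_sub : [set G_orbit act m | m : M]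
    \subset [set G_orbit act m0; G_orbit act m1].
  apply/subsetP => _ /imsetP [m _ ->].
  have : m \in setT by [].
  rewrite -cover in_setU in_set2.
  by case/orP => /(G_orbit_eq actM act_dual) ->; rewrite eqxx ?orbT.
apply: leq_trans (subset_leq_card orbits_sub) _.
by rewrite cards2; case: (_ == _).
Qed.
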